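(* Let $m\in\mathbb{Z}$, $p,q\in\{1,\dots,2n\}$, and assume $m+(p-n)_+\ge 1+(q-n)_+$, where $x_+=\max(x,0)$. Let $M_1\in M_p(m)$ and $M_2\in M_q(1)$. If $M_1\cdot M_2$ is a highest weight vector, then \[ M_1=\begin{cases}Y_p(m) & \text{if } p\in\{1,\dots,n\},\\ Y_{2n-p}(m-n+p) & \text{if } p\in\{n+1,\dots,2n\}.\end{cases} \]
   Context: Fix $n\ge 2$ and type $C_n$ with $I=\{1,\dots,n\}$. Let $\mathcal{M}$ be the set of Laurent monomials $M=\prod_{i\in I,k\in\mathbb{Z}}Y_i(k)^{y_i(k)}$ ($y_i(k)\in\mathbb{Z}$, finitely many nonzero); put $Y_0(k)=Y_{n+1}(k)=1$. For $i\in I$ put $\varepsilon_i(M)=\max_k(-\sum_{j>k}y_i(j))$; $M$ is a highest weight vector if $\varepsilon_i(M)=0$ for all $i\in I$ (equivalently all Kashiwara operators $\tilde e_i$ of Nakajima's monomial crystal kill $M$). The $X$-variables are $X_i(k)=Y_i(k)Y_{i-1}(k+1)^{-1}$ and $X_{\bar i}(k)=Y_{i-1}(k+n-i+1)Y_i(k+n-i+1)^{-1}$ for $1\le i\le n$, $k\in\mathbb{Z}$. The alphabet $\mathcal{I}=\{1,\dots,n,\bar n,\dots,\bar 1\}$ is ordered $1<\cdots<n<\bar n<\cdots<\bar 1$. For $1\le k\le 2n$, $m\in\mathbb{Z}$: $M_k(m)=\{X_{i_1}(k+m-1)X_{i_2}(k+m-2)\cdots X_{i_k}(m): i_j\in\mathcal{I},\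 i_1<\cdots<i_k\}$. (The quantity $m+(p-n)_+$ is called the height of a monomial of $M_p(m)$.) *)

From HB Require Import structures.
From mathcomp Require Import all_boot all_order all_algebra.
Set Implicit Arguments. Unset Strict Implicit. Unset Printing Implicit Defensive.
Import Order.TTheory GRing.Theory Num.Theory.
Local Open Scope ring_scope.

(* Type C_n, I = {1,..,n}.  A Laurent monomial prod Y_i(k)^{y_i(k)} is
   represented by a finite formal list of factors (i, k, e) meaning Y_i(k)^e;
   its exponent function is [yexp]. *)
Definition monomial := seq (nat * int * int).

Definition yexp (M : monomial) (i : nat) (k : int) : int :=
  \sum_(t <- M | (t.1.1 == i) && (t.1.2 == k)) t.2.

Definition tail (M : monomial) (i : nat) (k : int) : int :=
  \sum_(t <- M | (t.1.1 == i) && (k < t.1.2)) t.2.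

Definition mprod (M1 M2 : monomial) : monomial := M1 ++ M2.

Definition meq (n : nat) (M1 M2 : monomial) : Prop :=
  forall i k, (0 < i <= n)%N -> yexp M1 i k = yexp M2 i k.

(* eps_is M i z  <->  eps_i(M) = max_k (- sum_{j>k} y_i(j)) = z *)
Definition eps_is (M : monomial) (i : nat) (z : int) : Prop :=
  (exists k, - tail M i k = z) /\ (forall k, - tail M i k <= z).

Definition highest_weight (n : nat) (M : monomial) : Prop :=
  forall i, (0 < i <= n)%N -> eps_is M i 0.

(* Y_i(k)^e, with Y_0 = Y_{n+1} = 1 (indices outside I give the trivial monomial) *)
Definition Yv (n i : nat) (k e : int) : monomial :=
  if (0 < i <= n)%N then [:: (i, k, e)] else [::].

(* Letters of the alphabet 1 < ... < n < nbar < ... < 1bar are encoded by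
   a in {1,..,2n}: a <= n encodes a, a > n encodes bar(2n+1-a). *)
Definition Xv (n a : nat) (k : int) : monomial :=
  if (a <= n)%N then Yv n a k 1 ++ Yv n a.-1 (k + 1) (-1)
  else let i := (n.*2.+1 - a)%N in
       let k' := k + n%:Z - i%:Z + 1 in
       Yv n i.-1 k' 1 ++ Yv n i k' (-1).

Definition Xprod (n : nat) (s : seq nat) (m : int) : monomial :=
  flatten [seq Xv n (nth 0%N s j) (m + (size s)%:Z - 1 - j%:Z) | j <- iota 0 (size s)].

Definition inM (n p : nat) (m : int) (M : monomial) : Prop :=
  exists s : seq nat,
    [/\ size s = p, sorted ltn s, all (fun a => (0 < a <= n.*2)%N) s
      & meq n M (Xprod n s m)].

(* Reading X_(a_1)(b+p-1) ... X_(a_p)(b) off the definition of the X-variables,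
   consecutive factors telescope: the monomial of a column s is the product over
   the boundaries g between the letters g and g+1 of Y_(node g)(shift g)^(bsign g),
   with exponent +1 at the top of each run of letters of s and -1 just below each
   run that does not start at 1 (a gap).
   A monomial is highest weight iff all its tails sum_(j>k) y_i(j) are nonnegative,
   so the factor Y_i(P)^-1 of a gap is compensated by a factor Y_i(P') with P' >= P
   at the top of some run.  Inside one column, the top of a run lies strictly
   below, for the lexicographic order on (shift, node), the gap of the same run or
   of the next one, unless the column is 1 ... g.  Hence a gap of maximal rank in
   M1 M2 is compensated by a column of the form 1 ... g; this column is not M1,
   which has a gap, and not M2 = 1 ... q either, because the height condition puts
   its top below every gap of M1.  So M1 has no gap: it is the column 1 ... p, whose
   monomial is a single Y. *)

From mathcomp Require Import all_boot all_order all_algebra.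
From mathcomp Require Import zify.
Set Implicit Arguments. Unset Strict Implicit. Unset Printing Implicit Defensive.
Import Order.TTheory GRing.Theory Num.Theory.
Local Open Scope ring_scope.

Lemma tail_nil i k : tail [::] i k = 0.
Proof. by rewrite /tail big_nil. Qed.

Lemma tail_cons t M i k : tail (t :: M) i k =
  (if (t.1.1 == i) && (k < t.1.2) then t.2 else 0) + tail M i k.
Proof. by rewrite /tail big_cons; case: ifP; rewrite ?add0r. Qed.

Lemma tail_cat M1 M2 i k : tail (M1 ++ M2) i k = tail M1 i k + tail M2 i k.
Proof. by rewrite /tail big_cat. Qed.

Lemma yexp_cons t M i k : yexp (t :: M) i k =
  (if (t.1.1 == i) && (t.1.2 == k) then t.2 else 0) + yexp M i k.
Proof. by rewrite /yexp big_cons; case: ifP; rewrite ?add0r. Qed.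

Lemma yexp_tail M i k : yexp M i k = tail M i (k - 1) - tail M i k.
Proof.
elim: M => [|t M IH]; first by rewrite /yexp big_nil !tail_nil subrr.
rewrite yexp_cons !tail_cons IH.
case: (t.1.1 == i) => /=; last by rewrite !add0r.
case: (ltgtP t.1.2 k) => [lt|gt|->]; do ?case: ifP; lia.
Qed.

Lemma tail_sum_yexp M (K : seq int) i k :
  uniq K -> {subset [seq t.1.2 | t <- M] <= K} ->
  tail M i k = \sum_(j <- K | k < j) yexp M i j.
Proof.
move=> uniqK; elim: M => [|t M IH] MK.
  by rewrite tail_nil big1 // => j _; rewrite /yexp big_nil.
rewrite tail_cons IH => [|j jM]; last by apply: MK; rewrite inE jM orbT.
under [RHS]eq_bigr do rewrite yexp_cons.
rewrite big_split /=; congr (_ + _).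
have tK : t.1.2 \in K by apply: MK; rewrite inE eqxx.
rewrite big_mkcond (bigD1_seq t.1.2) //= eqxx andbT big1 ?addr0 => [|j /negbTE tj].
  by case: (k < t.1.2); case: (t.1.1 == i).
by rewrite (eq_sym t.1.2) tj andbF; case: ifP.
Qed.

Lemma tail_meq n M1 M2 i k : meq n M1 M2 -> (0 < i <= n)%N ->
  tail M1 i k = tail M2 i k.
Proof.
move=> eqM Ii; set K := undup [seq t.1.2 | t <- M1 ++ M2].
have sub M : {subset M <= M1 ++ M2} -> {subset [seq t.1.2 | t <- M] <= K}.
  by move=> MM j /mapP[t tM ->]; rewrite mem_undup; apply: map_f; apply: MM.
rewrite !(@tail_sum_yexp _ K) ?undup_uniq //; last 2 first.
- by apply: sub => t tM; rewrite mem_cat tM orbT.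
- by apply: sub => t tM; rewrite mem_cat tM.
by apply: eq_bigr => j _; apply: eqM.
Qed.

(* The boundary g lies between the letters g and g+1 of the alphabet, encoded as in
   [Xv]; in the column s placed at height b it carries the factor
   Y_(node g)(shift g)^(bsign g), and [column_tail] is the tail of their product. *)
Definition node (n g : nat) : nat := minn g (n.*2 - g).

Definition shift (n : nat) (b : int) (s : seq nat) (g : nat) : int :=
  b + (count (fun y => g < y)%N s)%:Z + (g - n)%N%:Z.

Definition bsign (s : seq nat) (g : nat) : int := (g \in s)%:R - (g.+1 \in s)%:R.

Definition in_tail (n : nat) (b : int) (s : seq nat) (i : nat) (k : int) (g : nat) : bool :=
  (node n g == i) && (k < shift n b s g).

Definition column_tail (n : nat) (b : int) (s : seq nat) (i : nat) (k : int) : int :=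
  \sum_(g < n.*2) bsign s g *+ in_tail n b s i k g.

Lemma node_in_I n g : (0 < g < n.*2)%N -> (0 < node n g <= n)%N.
Proof. by rewrite /node; lia. Qed.

Lemma in_tail_node0 n b s i k g : (0 < i)%N -> node n g = 0%N -> in_tail n b s i k g = false.
Proof. by rewrite /in_tail => i_gt0 ->; rewrite eq_sym gtn_eqF. Qed.

Lemma count_gt_iota g : count (fun y => g < y)%N (iota 1 g) = 0%N.
Proof. by rewrite (eq_in_count (a2 := pred0)) ?count_pred0 // => y; rewrite mem_iota /=; lia. Qed.

Lemma tail_Yv n j k0 e i k : (0 < i <= n)%N ->
  tail (Yv n j k0 e) i k = if (j == i) && (k < k0) then e else 0.
Proof.
rewrite /Yv => Ii; case: ifP => Ij; first by rewrite tail_cons tail_nil addr0.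
by rewrite tail_nil; case: eqP => // ji; move: Ij; rewrite ji Ii.
Qed.

Lemma tail_Xv n a c i k : (0 < a <= n.*2)%N -> (0 < i <= n)%N ->
  tail (Xv n a c) i k =
    ((node n a == i) && (k < c + (a - n)%N%:Z))%:R -
    ((node n a.-1 == i) && (k < c + 1 + (a.-1 - n)%N%:Z))%:R.
Proof.
move=> Ia Ii; rewrite /Xv /node; case: leqP => an; rewrite tail_cat !tail_Yv //.
  have -> : minn a (n.*2 - a) = a by lia.
  have -> : minn a.-1 (n.*2 - a.-1) = a.-1 by lia.
  have -> : (a - n)%N = 0%N by lia.
  have -> : (a.-1 - n)%N = 0%N by lia.
  by rewrite !addr0; do 2 case: ifP.
have -> : minn a (n.*2 - a) = (n.*2.+1 - a).-1 by lia.
have -> : minn a.-1 (n.*2 - a.-1) = (n.*2.+1 - a)%N by lia.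
have -> : c + 1 + (a.-1 - n)%N%:Z = c + (a - n)%N%:Z by lia.
have -> : c + n%:Z - (n.*2.+1 - a)%N%:Z + 1 = c + (a - n)%N%:Z by lia.
by do 2 case: ifP.
Qed.

Lemma Xprod_cons n a s b :
  Xprod n (a :: s) b = Xv n a (b + (size s)%:Z) ++ Xprod n s b.
Proof.
rewrite /Xprod /= -[1%N]addn0 iotaDl -map_comp /=.
congr (_ ++ _); first by congr (Xv _ _ _); lia.
congr flatten; apply: eq_map => j /=; congr (Xv _ _ _); lia.
Qed.

Lemma tail_Xprod_letters n s b i k :
  sorted ltn s -> all (fun a => 0 < a <= n.*2)%N s -> (0 < i <= n)%N ->
  tail (Xprod n s b) i k =
    \sum_(a <- s) ((in_tail n b s i k a)%:R - (in_tail n b s i k a.-1)%:R).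
Proof.
move=> + + Ii; elim: s => [|a s IH] sorted_s letters.
  by rewrite /Xprod /= tail_nil big_nil.
have a_min : all (ltn a) s := order_path_min ltn_trans sorted_s.
have count_above y : (a <= y)%N ->
    count (fun x => y < x)%N (a :: s) = count (fun x => y < x)%N s.
  by move=> ay /=; rewrite ltnNge ay.
have count_all y : (y <= a)%N -> count (fun x => y < x)%N s = size s.
  move=> ya; apply/eqP; rewrite -all_count; apply/allP => x xs.
  by have := allP a_min x xs; rewrite /=; lia.
move: letters => /= /andP[Ia letters].
rewrite Xprod_cons tail_cat IH ?(path_sorted sorted_s) // big_cons tail_Xv //.
congr (_ - _ + _).
- by rewrite /in_tail /shift count_above // count_all.
- by rewrite /in_tail /shift /= (_ : (a.-1 < a)%N) ?count_all //; lia.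
apply: eq_big_seq => y ys; have ay : (a < y)%N := allP a_min y ys.
by rewrite /in_tail /shift !count_above //; lia.
Qed.

Lemma big_seq_indicator (s : seq nat) N (F : nat -> int) :
  uniq s -> all (fun a => a < N)%N s ->
  \sum_(a <- s) F a = \sum_(0 <= g < N) (g \in s)%:R * F g.
Proof.
move=> uniq_s s_lt; under [RHS]eq_bigr do rewrite mulr_natl mulrb.
rewrite -big_mkcond /= -[RHS]big_filter; apply: perm_big; apply: uniq_perm => //.
  exact/filter_uniq/iota_uniq.
move=> a; rewrite mem_filter mem_index_iota.
by case: (boolP (a \in s)) => // a_s; rewrite (allP s_lt a a_s).
Qed.

Lemma sum_letters_to_boundaries (s : seq nat) N (h : nat -> int) :
  uniq s -> all (fun a => 0 < a <= N)%N s -> h 0%N = 0 -> h N = 0 ->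
  \sum_(a <- s) (h a - h a.-1) = \sum_(g < N) bsign s g * h g.
Proof.
move=> uniq_s letters h0 hN.
have s_lt : all (fun a => a < N.+1)%N s by apply: sub_all letters => a /andP[].
rewrite big_split /= !(big_seq_indicator _ uniq_s s_lt) /=.
rewrite big_nat_recr //= hN mulr0 addr0 big_nat_recl //= h0 oppr0 mulr0 add0r.
rewrite -big_split big_mkord; apply: eq_bigr => g _.
by rewrite /bsign mulrBl mulrN.
Qed.

Lemma tail_Xprod n s b i k :
  sorted ltn s -> all (fun a => 0 < a <= n.*2)%N s -> (0 < i <= n)%N ->
  tail (Xprod n s b) i k = column_tail n b s i k.
Proof.
move=> sorted_s letters Ii; rewrite tail_Xprod_letters //.
rewrite (@sum_letters_to_boundaries _ n.*2) ?(sorted_uniq ltn_trans ltnn) //.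
- by apply: eq_bigr => g _; rewrite mulr_natr.
- by rewrite in_tail_node0 //; [case/andP: Ii | rewrite /node min0n].
- by rewrite in_tail_node0 //; [case/andP: Ii | rewrite /node subnn minn0].
Qed.

Lemma column_tail_iota n p b i k : (0 < p <= n.*2)%N -> (0 < i <= n)%N ->
  column_tail n b (iota 1 p) i k =
  tail (if (p <= n)%N then Yv n p b 1 else Yv n (n.*2 - p) (b - n%:Z + p%:Z) 1) i k.
Proof.
move=> Ip /andP[i_gt0 i_le].
have other g : g != p -> bsign (iota 1 p) g *+ in_tail n b (iota 1 p) i k g = 0.
  case: g => [_|g gp]; first by rewrite in_tail_node0 // /node min0n.
  have same : (g.+2 \in iota 1 p) = (g.+1 \in iota 1 p) by rewrite !mem_iota; lia.
  by rewrite /bsign same subrr mul0rn.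
rewrite /column_tail; case: (ltnP p n.*2) => [p_lt|p_ge]; last first.
  have p_eq : p = n.*2 by case/andP: Ip; lia.
  rewrite big1 => [|g _]; last by apply: other; rewrite neq_ltn p_eq ltn_ord.
  by rewrite leqNgt (_ : (n < p)%N) /= ?p_eq ?subnn ?tail_nil //; lia.
rewrite (bigD1 (Ordinal p_lt)) //= big1 ?addr0 => [|g g_p]; last first.
  by apply: other; rewrite -(inj_eq val_inj) in g_p.
have -> : bsign (iota 1 p) p = 1.
  by rewrite /bsign !mem_iota add1n ltnSn ltnn !andbF andbT; case/andP: Ip => ->.
rewrite mulrb /in_tail /shift /node count_gt_iota.
case: leqP => pn; rewrite tail_Yv ?i_gt0 //.
  have -> : minn p (n.*2 - p) = p by lia.
  have -> : (p - n)%N = 0%N by lia.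
  by rewrite !addr0.
have -> : minn p (n.*2 - p) = (n.*2 - p)%N by lia.
by have -> : b + 0%N%:Z + (p - n)%N%:Z = b - n%:Z + p%:Z by lia.
Qed.

(* Compares boundaries by (shift, node) lexicographically, since node <= n. *)
Definition potential (n : nat) (b : int) (s : seq nat) (g : nat) : int :=
  shift n b s g * n.+1%:Z + (node n g)%:Z.

Lemma potential_lt n b1 s1 g1 b2 s2 g2 :
  shift n b1 s1 g1 < shift n b2 s2 g2 \/
  shift n b1 s1 g1 = shift n b2 s2 g2 /\ (node n g1 < node n g2)%N ->
  potential n b1 s1 g1 < potential n b2 s2 g2.
Proof.
rewrite /potential; have : (node n g1 <= n)%N by rewrite /node; lia.
move: (shift _ _ _ g1) (shift _ _ _ g2) => x y node1 [lt_xy | [-> lt_node]]; last lia.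
have : (x + 1) * n.+1%:Z <= y * n.+1%:Z by rewrite ler_wpM2r //; lia.
lia.
Qed.

Lemma potential_le n b1 s1 g1 b2 s2 g2 : node n g1 = node n g2 ->
  shift n b1 s1 g1 <= shift n b2 s2 g2 -> potential n b1 s1 g1 <= potential n b2 s2 g2.
Proof. by rewrite /potential => -> le_shift; rewrite lerD2r ler_wpM2r. Qed.

Definition run_top (s : seq nat) (g : nat) : bool := (g \in s) && (g.+1 \notin s).

Definition run_gap (s : seq nat) (z : nat) : bool := [&& (0 < z)%N, z \notin s & z.+1 \in s].

Lemma count_split (s : seq nat) z g : (z <= g)%N ->
  count (fun y => z < y)%N s =
    (count (fun y => g < y)%N s + count (fun y => z < y <= g)%N s)%N.
Proof. by move=> zg; elim: s => //= y s ->; case: (ltnP g y); case: (ltnP z y) => /=; lia. Qed.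

Section Column.

Variables (n : nat) (b : int) (s : seq nat).
Hypotheses (sorted_s : sorted ltn s) (letters : all (fun a => 0 < a <= n.*2)%N s).

Let uniq_s : uniq s := sorted_uniq ltn_trans ltnn sorted_s.

Lemma potential_lt_gap_below g z : (z < g)%N -> (forall w, (z < w <= g)%N -> w \in s) ->
  potential n b s g < potential n b s z.
Proof.
move=> zg run.
have g_s : g \in s by apply: run; lia.
have /andP[_ g_le] := allP letters g g_s.
have count_run : (g - z <= count (fun y => z < y <= g) s)%N.
  rewrite -size_filter -(size_iota z.+1 (g - z)); apply: uniq_leq_size; first exact: iota_uniq.
  by move=> w; rewrite mem_iota mem_filter => w_range; rewrite run; lia.
have split_count := count_split s (ltnW zg).
by apply: potential_lt; rewrite /shift /node; lia.
Qed.

Lemma potential_lt_gap_above g z : (g < z)%N -> (forall w, (g < w <= z)%N -> w \notin s) ->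
  potential n b s g < potential n b s z.
Proof.
move=> gz hole.
have count_hole : count (fun y => g < y <= z)%N s = 0%N.
  rewrite (eq_in_count (a2 := pred0)) ?count_pred0 // => w ws /=.
  by apply: contraTF ws; apply: hole.
have split_count := count_split s (ltnW gz).
by apply: potential_lt; rewrite /shift /node; lia.
Qed.

Lemma gap_above_top g : run_top s g ->
  (exists2 z, run_gap s z & potential n b s g < potential n b s z) \/ s = iota 1 g.
Proof.
case/andP=> g_s g1_s; have /andP[g_gt0 _] := allP letters g g_s.
have [initial|/allPn[w]] := boolP (all (mem s) (iota 1 g)); last first.
  rewrite mem_iota /= => w_range w_s; left.
  pose P z := [&& (w <= z)%N, (z <= g)%N & z \notin s].
  have exP : exists z, P z by exists w; rewrite /P w_s; lia.
  have ubP z : P z -> (z <= g)%N by case/and3P.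
  have [z /and3P[wz zg z_s] z_max] := ex_maxnP exP ubP.
  have zg' : (z < g)%N by rewrite ltn_neqAle zg andbT; apply: contraNneq z_s => ->.
  have run v : (z < v <= g)%N -> v \in s.
    move=> v_range; apply: contraTT (v_range) => v_s.
    by have := z_max v; rewrite /P v_s; lia.
  exists z; first by rewrite /run_gap z_s run; lia.
  exact: potential_lt_gap_below.
have [/hasP[y0 y0_s gy0]|/hasPn above] := boolP (has (fun y => g < y)%N s); last first.
  right; apply: (irr_sorted_eq ltn_trans ltnn sorted_s (iota_ltn_sorted 1 g)) => x.
  rewrite mem_iota; apply/idP/idP => [x_s|x_range].
    by have := above x x_s; have := allP letters x x_s => /=; lia.
  by apply: (allP initial); rewrite mem_iota.
left; pose P y := (g < y)%N && (y \in s).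
have exP : exists y, P y by exists y0; rewrite /P y0_s gy0.
have [y /andP[gy y_s] y_min] := ex_minnP exP.
have hole v : (g < v < y)%N -> v \notin s.
  by move=> v_range; apply/negP => v_s; have := y_min v; rewrite /P v_s; lia.
have gy' : (g.+1 < y)%N by rewrite ltn_neqAle gy andbT; apply: contraNneq g1_s => ->.
exists y.-1; first by rewrite /run_gap prednK ?y_s ?hole; lia.
by apply: potential_lt_gap_above => [|v v_range]; [lia | apply: hole; lia].
Qed.

Lemma shift_gap_ge z : run_gap s z -> b + (size s - n)%N%:Z + 1 <= shift n b s z.
Proof.
case/and3P=> z_gt0 z_s z1_s.
have above : (0 < count (fun y => z < y) s)%N by rewrite -has_count; apply/hasP; exists z.+1.
have below : (count (predC (fun y => z < y)%N) s <= z.-1)%N.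
  rewrite -size_filter -(size_iota 1 z.-1); apply: uniq_leq_size; first exact: filter_uniq _ uniq_s.
  move=> w; rewrite mem_filter mem_iota /= => /andP[wz w_s].
  have /andP[w_gt0 _] := allP letters w w_s.
  have : w != z by apply: contraNneq z_s => <-.
  lia.
have := count_predC (fun y => z < y)%N s; rewrite /shift; lia.
Qed.

End Column.

Lemma gapless_iota n s : sorted ltn s -> all (fun a => 0 < a <= n.*2)%N s ->
  (forall z, ~~ run_gap s z) -> s = iota 1 (size s).
Proof.
move=> sorted_s letters gapless; have [-> //|exP] : s = [::] \/ exists g, g \in s.
  by case: (s) => [|a ?]; [left | right; exists a; exact: mem_head].
have ubP g : g \in s -> (g <= n.*2)%N by move/(allP letters)/andP=> [].
have [g g_s g_max] := ex_maxnP exP ubP.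
have g_top : run_top s g by rewrite /run_top g_s; apply/negP => /g_max; lia.
have [[z gap_z _]|s_iota] := gap_above_top 0 sorted_s letters g_top.
  by have := gapless z; rewrite gap_z.
by rewrite {2}s_iota size_iota.
Qed.

Lemma iota_gapless g z : ~~ run_gap (iota 1 g) z.
Proof. by rewrite /run_gap !mem_iota; lia. Qed.

Lemma bsign_gt0 s g : (0 < bsign s g) = run_top s g.
Proof. by rewrite /bsign /run_top; case: (g \in s); case: (g.+1 \in s). Qed.

Lemma sumr_ge0_exists_gt0 (R : realDomainType) (I : finType) (F : I -> R) i0 :
  0 <= \sum_i F i -> F i0 < 0 -> exists i, 0 < F i.
Proof.
move=> sum_ge0 Fi0_lt0; have [/existsP //|/existsPn F_le0] := boolP [exists i, 0 < F i].
have : \sum_i F i <= F i0.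
  rewrite (bigD1 i0) //= gerDl; apply: sumr_le0 => i _; rewrite leNgt; exact: F_le0.
by move/(le_trans sum_ge0); rewrite leNgt Fi0_lt0.
Qed.

Section TwoColumns.

Variables (n p q : nat) (m : int) (s1 s2 : seq nat).
Hypotheses (sorted_s1 : sorted ltn s1) (sorted_s2 : sorted ltn s2).
Hypotheses (letters_s1 : all (fun a => 0 < a <= n.*2)%N s1)
           (letters_s2 : all (fun a => 0 < a <= n.*2)%N s2).
Hypotheses (size_s1 : size s1 = p) (size_s2 : size s2 = q).
Hypothesis height : 1 + (q - n)%N%:Z <= m + (p - n)%N%:Z.
Hypothesis tails_ge0 : forall i k, (0 < i <= n)%N ->
  0 <= column_tail n m s1 i k + column_tail n 1 s2 i k.

Let col (c : bool) := if c then s1 else s2.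
Let base (c : bool) : int := if c then m else 1.
Let rank (c : bool) (g : nat) := potential n (base c) (col c) g.

Let sorted_col c : sorted ltn (col c). Proof. by case: c. Qed.
Let letters_col c : all (fun a => 0 < a <= n.*2)%N (col c). Proof. by case: c. Qed.

Lemma top_above_gap c z : run_gap (col c) z ->
  exists c', exists2 g', run_top (col c') g' & rank c z <= rank c' g'.
Proof.
case/and3P=> z_gt0 z_s z1_s.
have /andP[_ z_lt] := allP (letters_col c) _ z1_s.
pose i := node n z; pose k := shift n (base c) (col c) z - 1.
pose F (x : bool * 'I_n.*2) := bsign (col x.1) x.2 *+ in_tail n (base x.1) (col x.1) i k x.2.
have sum_ge0 : 0 <= \sum_x F x.
  rewrite -(pair_big xpredT xpredT (fun c g => F (c, g))) big_bool /=.
  by apply/tails_ge0/node_in_I; rewrite z_gt0.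
have Fz_lt0 : F (c, Ordinal z_lt) < 0.
  by rewrite /F /bsign /in_tail /= (negbTE z_s) z1_s eqxx /k ltrBlDr ltrDl.
have [[c' g'] ] := sumr_ge0_exists_gt0 sum_ge0 Fz_lt0.
rewrite /F /= mulrb; case: ifP => [/andP[/eqP node_eq k_lt]|]; last by rewrite ltxx.
rewrite bsign_gt0 => top; exists c', (val g') => //.
by apply: potential_le => //; rewrite -ltzD1 -ltrBlDr.
Qed.

Lemma first_column_gapless z0 : ~~ run_gap s1 z0.
Proof.
apply/negP => gap_z0.
have gap_lt c z : run_gap (col c) z -> (z < n.*2)%N.
  by case/and3P=> _ _ /(allP (letters_col c))/andP[].
pose P (x : bool * 'I_n.*2) := run_gap (col x.1) x.2.
have [[c z] /= gap_z z_max] :=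
  @arg_maxP _ _ _ (true, Ordinal (gap_lt true z0 gap_z0)) P (fun x => rank x.1 x.2) gap_z0.
have [c' [g' top_g' le_rank]] := top_above_gap gap_z.
have [[z' gap_z' lt_rank]|col_iota] :=
  gap_above_top (base c') (sorted_col c') (letters_col c') top_g'.
  have := z_max (c', Ordinal (gap_lt c' z' gap_z')) gap_z'.
  by rewrite leNgt (le_lt_trans le_rank lt_rank).
case: c' col_iota top_g' le_rank => /= col_iota top_g' le_rank.
  by move: gap_z0; rewrite col_iota (negbTE (iota_gapless _ _)).
have q_g' : q = g' by rewrite -size_s2 col_iota size_iota.
have lt_z0 : rank false g' < rank true z0.
  apply: potential_lt; left; rewrite {1}/shift /=.
  rewrite col_iota count_gt_iota.
  have := shift_gap_ge m sorted_s1 letters_s1 gap_z0; rewrite size_s1; lia.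
have := z_max (true, Ordinal (gap_lt true z0 gap_z0)) gap_z0.
by rewrite leNgt (le_lt_trans le_rank lt_z0).
Qed.

Lemma first_column_iota : s1 = iota 1 p.
Proof.
rewrite -size_s1; apply: (gapless_iota sorted_s1 letters_s1) => z.
exact: first_column_gapless.
Qed.

End TwoColumns.

Theorem theorem5p10 (n : nat) (hn : (2 <= n)%N) (m : int) (p q : nat)
  (hp : (1 <= p <= n.*2)%N) (hq : (1 <= q <= n.*2)%N)
  (hheight : m + (p - n)%N%:Z >= 1 + (q - n)%N%:Z)
  (M1 M2 : monomial)
  (hM1 : inM n p m M1) (hM2 : inM n q 1 M2)
  (hhw : highest_weight n (mprod M1 M2)) :
  meq n M1 (if (p <= n)%N then Yv n p m 1
            else Yv n (n.*2 - p) (m - n%:Z + p%:Z) 1).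
Proof.
case: hM1 => s1 [size_s1 sorted_s1 letters_s1 M1_s1].
case: hM2 => s2 [size_s2 sorted_s2 letters_s2 M2_s2].
have tail_M1 i k : (0 < i <= n)%N -> tail M1 i k = column_tail n m s1 i k.
  by move=> Ii; rewrite (tail_meq _ M1_s1) // tail_Xprod.
have tails_ge0 i k : (0 < i <= n)%N ->
    0 <= column_tail n m s1 i k + column_tail n 1 s2 i k.
  move=> Ii; have [_ /(_ k)] := hhw i Ii.
  by rewrite /mprod tail_cat tail_M1 // (tail_meq _ M2_s2) // tail_Xprod // oppr_le0.
have s1_iota := first_column_iota sorted_s1 sorted_s2 letters_s1 letters_s2
  size_s1 size_s2 hheight tails_ge0.
move=> i k Ii; rewrite !yexp_tail !tail_M1 // s1_iota !column_tail_iota //.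
Qed.
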